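(* $R(B_2,B_{10}) \ge 25$; that is, there exists a graph on $24$ vertices containing no copy of $B_2$ whose complement contains no copy of $B_{10}$.
   Context: For graphs $G,H$, the Ramsey number $R(G,H)$ is the smallest integer $N$ such that every red/blue coloring of the edges of $K_N$ contains a red copy of $G$ (as a subgraph, not necessarily induced) or a blue copy of $H$. The book $B_k$ is the graph on $k+2$ vertices consisting of an edge $uv$ together with $k$ further vertices, each adjacent exactly to $u$ and $v$. *)

From mathcomp Require Import all_boot.
Set Implicit Arguments. Unset Strict Implicit. Unset Printing Implicit Defensive.

Definition simple_graph (T : finType) (e : rel T) : Prop :=
  (forall x y, e x y = e y x) /\ (forall x, ~~ e x x).

Definition complement (T : finType) (e : rel T) : rel T :=
  fun x y => (x != y) && ~~ e x y.

(* The graph e contains a copy of the book B_k (as a not necessarily induced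
   subgraph): an edge uv and k further vertices each adjacent to both u and v. *)
Definition contains_book (T : finType) (e : rel T) (k : nat) : Prop :=
  exists u v : T, exists S : {set T},
    [/\ e u v, u \notin S, v \notin S, #|S| = k &
        forall w, w \in S -> e u w && e v w].

From mathcomp Require Import all_boot.

(* The witness is an explicit graph, checked pair by pair.  [card] and the
   [fintype] quantifiers are locked and do not compute, so the checks on ['I_n]
   are transferred to [all]/[count] over [iota 0 n], which [vm_compute]
   decides. *)

Lemma all_iota_ord (n : nat) (P : pred nat) :
  all P (iota 0 n) -> forall i : 'I_n, P i.
Proof. by move=> /allP hP i; apply: hP; rewrite mem_iota add0n ltn_ord. Qed.

Lemma card_ord_pred (n : nat) (p : pred nat) :
  #|[pred i : 'I_n | p i]| = count p (iota 0 n).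
Proof.
rewrite -val_enum_ord count_map -size_filter cardE /enum_mem filter_predT.
by congr size; apply: eq_filter.
Qed.

Section OrdinalGraph.

Variables (n : nat) (en : rel nat) (e : rel 'I_n).
Hypothesis e_en : forall i j : 'I_n, e i j = en i j.

Definition simple_graph_upto : bool :=
  all (fun x => all (fun y => (en x y == en y x) && ~~ en x x) (iota 0 n))
      (iota 0 n).

Definition book_free_upto (k : nat) : bool :=
  all (fun u => all (fun v =>
         en u v ==> (count (fun w => en u w && en v w) (iota 0 n) < k))
       (iota 0 n)) (iota 0 n).

Lemma simple_graph_ord : simple_graph_upto -> simple_graph e.
Proof.
move=> /all_iota_ord simple; split=> [x y | x]; rewrite !e_en.
- by have /all_iota_ord/(_ y)/andP[/eqP] := simple x.
- by have /all_iota_ord/(_ x)/andP[] := simple x.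
Qed.

Lemma book_free_ord (k : nat) : book_free_upto k -> ~ contains_book e k.
Proof.
move=> /all_iota_ord free [u [v [S [euv _ _ cardS Sc]]]].
have /all_iota_ord/(_ v) := free u; rewrite -e_en euv /= ltnNge => /negP; apply.
rewrite -card_ord_pred -cardS; apply/subset_leq_card/subsetP=> w /Sc.
by rewrite !inE -!e_en.
Qed.

End OrdinalGraph.

Arguments simple_graph_ord {n en e}.
Arguments book_free_ord {n en e} e_en {k}.

Definition adj24 : seq (seq nat) :=
  [:: [:: 1; 3; 10; 12; 13; 15; 19; 20; 23]; [:: 0; 2; 4; 6; 8; 16; 17; 19; 22];
      [:: 1; 5; 7; 9; 10; 12; 13; 14; 23]; [:: 0; 5; 6; 9; 10; 11; 14; 16; 22];
      [:: 1; 9; 10; 11; 15; 16; 18; 23]; [:: 2; 3; 8; 12; 19; 20; 21; 22];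
      [:: 1; 3; 7; 8; 9; 12; 18; 21; 23]; [:: 2; 6; 10; 11; 15; 16; 19; 20; 22];
      [:: 1; 5; 6; 10; 11; 13; 14; 15; 20]; [:: 2; 3; 4; 6; 13; 15; 17; 19; 20];
      [:: 0; 2; 3; 4; 7; 8; 17; 18; 21]; [:: 3; 4; 7; 8; 12; 13; 17; 19; 23];
      [:: 0; 2; 5; 6; 11; 15; 16; 17; 18]; [:: 0; 2; 8; 9; 11; 16; 18; 21; 22];
      [:: 2; 3; 8; 15; 16; 17; 18; 19; 23]; [:: 0; 4; 7; 8; 9; 12; 14; 21; 22];
      [:: 1; 3; 4; 7; 12; 13; 14; 20; 21]; [:: 1; 9; 10; 11; 12; 14; 20; 21; 22];
      [:: 4; 6; 10; 12; 13; 14; 19; 20; 22]; [:: 0; 1; 5; 7; 9; 11; 14; 18; 21];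
      [:: 0; 5; 7; 8; 9; 16; 17; 18; 23]; [:: 5; 6; 10; 13; 15; 16; 17; 19; 23];
      [:: 1; 3; 5; 7; 13; 15; 17; 18; 23]; [:: 0; 2; 4; 6; 11; 14; 20; 21; 22]].

Definition adj24_rel : rel nat := fun i j => j \in nth [::] adj24 i.

Definition coadj24_rel : rel nat := fun i j => (i != j) && ~~ adj24_rel i j.

Definition G24 : rel 'I_24 := fun i j => adj24_rel i j.

Lemma complement_G24 (i j : 'I_24) : complement G24 i j = coadj24_rel i j.
Proof. by rewrite /complement -val_eqE. Qed.

Lemma adj24_simple : simple_graph_upto 24 adj24_rel.
Proof. by vm_compute. Qed.

Lemma adj24_B2_free : book_free_upto 24 adj24_rel 2.
Proof. by vm_compute. Qed.

Lemma coadj24_B10_free : book_free_upto 24 coadj24_rel 10.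
Proof. by vm_compute. Qed.

Theorem mainTheorem6 :
  exists e : rel 'I_24,
    simple_graph e /\ ~ contains_book e 2 /\ ~ contains_book (complement e) 10.
Proof.
exists G24; split; last split.
- exact: (simple_graph_ord (en := adj24_rel) (fun _ _ => erefl) adj24_simple).
- exact: (book_free_ord (en := adj24_rel) (fun _ _ => erefl) adj24_B2_free).
- exact: (book_free_ord complement_G24 coadj24_B10_free).
Qed.
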